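(* Let $T:X\rightrightarrows X^*$ be a multivalued operator. The following are equivalent: (1) $T$ is pseudomonotone; (2) $S(T,K)\subset S(T^\rho,K)$ for all $K\subset X$; (3) $M(T^\rho,K)\subset M(T,K)$ for all $K\subset X$.
   Context: $X$ is a real Banach space with dual $X^*$ and pairing $\langle x,x^*\rangle=x^*(x)$. A multivalued operator $T:X\rightrightarrows X^*$ is identified with its graph $T\subset X\times X^*$; $T(x)=\{x^*:(x,x^* )\in T\}$. For $K\subset X$: $S(T,K)=\{x\in K: \exists x^*\in T(x),\ \langle y-x,x^*\rangle\ge0\ \forall y\in K\}$ and $M(T,K)=\{x\in K: \langle x-y,y^*\rangle\le0\ \forall (y,y^* )\in T \text{ with } y\in K\}$. For $(x,x^* ),(y,y^* )\in X\times X^*$, write $(x,x^* )\sim_p(y,y^* )$ if either $\min\{\langle x-y,y^*\rangle,\langle y-x,x^*\rangle\}<0$ or $\langle x-y,y^*\rangle=\langle y-x,x^*\rangle=0$. The pseudomonotone polar is $T^\rho=\{(x,x^* ): (x,x^* )\sim_p(y,y^* )\ \forall (y,y^* )\in T\}$. $T$ is pseudomonotone if for all $(x,x^* ),(y,y^* )\in T$, $\langle y-x,x^*\rangle\ge0$ implies $\langle y-x,y^*\rangle\ge0$. *)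

From Stdlib Require Import Reals.
Open Scope R_scope.
Set Implicit Arguments.

Record Banach := {
  bcar :> Type;
  badd : bcar -> bcar -> bcar;
  bopp : bcar -> bcar;
  bzero : bcar;
  bscal : R -> bcar -> bcar;
  bnorm : bcar -> R;
  badd_assoc : forall x y z, badd x (badd y z) = badd (badd x y) z;
  badd_comm : forall x y, badd x y = badd y x;
  badd_0 : forall x, badd x bzero = x;
  badd_opp : forall x, badd x (bopp x) = bzero;
  bscal_1 : forall x, bscal 1 x = x;
  bscal_assoc : forall a b x, bscal a (bscal b x) = bscal (a * b) x;
  bscal_distr_v : forall a x y, bscal a (badd x y) = badd (bscal a x) (bscal a y);
  bscal_distr_s : forall a b x, bscal (a + b) x = badd (bscal a x) (bscal b x);
  bnorm_0 : forall x, bnorm x = 0 <-> x = bzero;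
  bnorm_scal : forall a x, bnorm (bscal a x) = Rabs a * bnorm x;
  bnorm_tri : forall x y, bnorm (badd x y) <= bnorm x + bnorm y;
  bcomplete : forall u : nat -> bcar,
    (forall eps, eps > 0 -> exists N, forall n m, (n >= N)%nat -> (m >= N)%nat ->
        bnorm (badd (u n) (bopp (u m))) < eps) ->
    exists l, forall eps, eps > 0 -> exists N, forall n, (n >= N)%nat ->
        bnorm (badd (u n) (bopp l)) < eps
}.

Definition bsub {X : Banach} (x y : X) : X := badd X x (bopp X y).

Record dual (X : Banach) := {
  dfun :> X -> R;
  dlin : forall a b (x y : X),
    dfun (badd X (bscal X a x) (bscal X b y)) = a * dfun x + b * dfun y;
  dbdd : exists M, forall x : X, Rabs (dfun x) <= M * bnorm X x
}.

Definition pair {X : Banach} (x : X) (xs : dual X) : R := dfun xs x.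

(* multivalued operator identified with its graph *)
Definition operator (X : Banach) := X -> dual X -> Prop.

Definition S_set (X : Banach) (T : operator X) (K : X -> Prop) : X -> Prop :=
  fun x => K x /\ exists xs, T x xs /\ forall y, K y -> pair (bsub y x) xs >= 0.

Definition M_set (X : Banach) (T : operator X) (K : X -> Prop) : X -> Prop :=
  fun x => K x /\ forall y ys, T y ys -> K y -> pair (bsub x y) ys <= 0.

Definition p_rel (X : Banach) (x : X) (xs : dual X) (y : X) (ys : dual X) : Prop :=
  Rmin (pair (bsub x y) ys) (pair (bsub y x) xs) < 0 \/
  (pair (bsub x y) ys = 0 /\ pair (bsub y x) xs = 0).

Definition pm_polar (X : Banach) (T : operator X) : operator X :=
  fun x xs => forall y ys, T y ys -> p_rel x xs y ys.

Definition pseudomonotone (X : Banach) (T : operator X) : Prop :=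
  forall x xs y ys, T x xs -> T y ys ->
    pair (bsub y x) xs >= 0 -> pair (bsub y x) ys >= 0.

Definition subset (X : Type) (A B : X -> Prop) : Prop := forall x, A x -> B x.

(* The relation ~p between (x, x^* ) and (y, y^* ) says exactly that this
   two-element operator is pseudomonotone.  Hence a pseudomonotone T is
   contained in its polar, which gives (2) and (3) since S(., K) is monotone and
   M(., K) antitone in the operator.  Conversely, testing (2) or (3) on the
   two-point set K = {x, y} recovers pseudomonotonicity for the pair. *)
From Stdlib Require Import Reals Lra.

Lemma dual_add {X : Banach} (f : dual X) (u v : X) : f (badd X u v) = f u + f v.
Proof. pose proof (dlin f 1 1 u v) as H. rewrite !bscal_1 in H. lra. Qed.

Lemma dual_zero {X : Banach} (f : dual X) : f (bzero X) = 0.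
Proof. pose proof (dual_add f (bzero X) (bzero X)) as H. rewrite badd_0 in H. lra. Qed.

Lemma bsub_add_swap {X : Banach} (x y : X) : badd X (bsub x y) (bsub y x) = bzero X.
Proof.
  unfold bsub. rewrite badd_assoc, <- (badd_assoc X x (bopp X y) y).
  rewrite (badd_comm X (bopp X y) y), badd_opp, badd_0, badd_opp. reflexivity.
Qed.

Lemma pair_bsub_swap {X : Banach} (x y : X) (f : dual X) :
  pair (bsub x y) f = - pair (bsub y x) f.
Proof.
  unfold pair. pose proof (dual_add f (bsub x y) (bsub y x)) as H.
  rewrite bsub_add_swap, dual_zero in H. lra.
Qed.

Lemma pair_bsub_diag {X : Banach} (x : X) (f : dual X) : pair (bsub x x) f = 0.
Proof. pose proof (pair_bsub_swap x x f). lra. Qed.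

Definition pm_pair {X : Banach} (x : X) (xs : dual X) (y : X) (ys : dual X) : Prop :=
  pair (bsub y x) xs >= 0 -> pair (bsub y x) ys >= 0.

Lemma p_relP {X : Banach} (x : X) (xs : dual X) (y : X) (ys : dual X) :
  p_rel x xs y ys <-> pm_pair x xs y ys /\ pm_pair y ys x xs.
Proof.
  unfold p_rel, pm_pair.
  rewrite (pair_bsub_swap x y ys), (pair_bsub_swap x y xs).
  pose proof (Rmin_l (- pair (bsub y x) ys) (pair (bsub y x) xs)) as Hmin_l.
  pose proof (Rmin_r (- pair (bsub y x) ys) (pair (bsub y x) xs)) as Hmin_r.
  split.
  - intros [Hlt | [H1 H2]]; split; intros H; try lra.
    all: unfold Rmin in Hlt; destruct Rle_dec in Hlt; lra.
  - intros [H1 H2].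
    destruct (Rlt_le_dec (Rmin (- pair (bsub y x) ys) (pair (bsub y x) xs)) 0);
      [left; assumption | right].
    assert (pair (bsub y x) ys >= 0) by (apply H1; lra).
    assert (- pair (bsub y x) xs >= 0) by (apply H2; lra).
    lra.
Qed.

Lemma pseudomonotone_sub_polar (X : Banach) (T : operator X) x xs :
  pseudomonotone T -> T x xs -> pm_polar T x xs.
Proof. intros Hpm Hx y ys Hy. apply p_relP. split; intro; eapply Hpm; eassumption. Qed.

Lemma S_set_mono (X : Banach) (T U : operator X) (K : X -> Prop) :
  (forall x xs, T x xs -> U x xs) -> subset (S_set T K) (S_set U K).
Proof. intros HTU x [Kx [xs [Hx Hvi]]]. split; [exact Kx|]. exists xs. auto. Qed.

Lemma M_set_anti (X : Banach) (T U : operator X) (K : X -> Prop) :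
  (forall x xs, T x xs -> U x xs) -> subset (M_set U K) (M_set T K).
Proof. intros HTU x [Kx Hmvi]. split; [exact Kx|]. auto. Qed.

Section TwoPointTest.

Variables (X : Banach) (T : operator X) (x y : X) (xs ys : dual X).
Hypotheses (Hx : T x xs) (Hy : T y ys) (Hxy : pair (bsub y x) xs >= 0).

Let K2 (z : X) : Prop := z = x \/ z = y.

Lemma two_point_S_incl_polar :
  subset (S_set T K2) (S_set (pm_polar T) K2) -> pair (bsub y x) ys >= 0.
Proof.
  intros HS.
  assert (Sx : S_set T K2 x).
  { split; [now left|]. exists xs. split; [exact Hx|].
    intros z [-> | ->]; [rewrite pair_bsub_diag; lra | exact Hxy]. }
  destruct (HS x Sx) as [_ [zs [Hz Hvi]]].
  apply (proj1 (proj1 (p_relP _ _ _ _) (Hz y ys Hy))), Hvi. now right.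
Qed.

Lemma two_point_M_polar_incl :
  subset (M_set (pm_polar T) K2) (M_set T K2) -> pair (bsub y x) ys >= 0.
Proof.
  intros HM.
  assert (Mx : M_set (pm_polar T) K2 x).
  { split; [now left|]. intros z zs Hz [-> | ->]; [rewrite pair_bsub_diag; lra|].
    (* (y, zs) lies in the polar, so it is pseudomonotone with (x, xs) *)
    pose proof (proj2 (proj1 (p_relP _ _ _ _) (Hz x xs Hx)) Hxy) as Hpm.
    rewrite pair_bsub_swap. lra. }
  pose proof (proj2 (HM x Mx) y ys Hy (or_intror eq_refl)) as Hle.
  rewrite pair_bsub_swap in Hle. lra.
Qed.

End TwoPointTest.

Theorem mainTheorem18 (X : Banach) (T : operator X) :
  (pseudomonotone T <-> forall K : X -> Prop, subset (S_set T K) (S_set (pm_polar T) K)) /\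
  (pseudomonotone T <-> forall K : X -> Prop, subset (M_set (pm_polar T) K) (M_set T K)).
Proof.
  split; split.
  - intros Hpm K. apply S_set_mono. intros x xs. now apply pseudomonotone_sub_polar.
  - intros HS x xs y ys Hx Hy Hxy. now apply (two_point_S_incl_polar X T x y xs ys).
  - intros Hpm K. apply M_set_anti. intros x xs. now apply pseudomonotone_sub_polar.
  - intros HM x xs y ys Hx Hy Hxy. now apply (two_point_M_polar_incl X T x y xs ys).
Qed.
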